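(* Let $R[x,y]$ be a relation with $n$ tuples whose vectors $(x,y)$ have $\ell_2$ norm at most $B$. Let $\widehat{E[X]}=\frac1n\sum_{t\in R}t[x]$, $\widehat{E[X^2]}=\frac1n\sum_{t\in R}t[x]^2$, $\widehat{\sigma^2_x}=\widehat{E[X^2]}-\widehat{E[X]}^2$, and let $\widetilde{E[X]}=\widehat{E[X]}+e_1$, $\widetilde{E[X^2]}=\widehat{E[X^2]}+e_2$ with $e_1,e_2\sim\mathcal N(0,\sigma^2/n^2)$, where $\sigma=\sqrt{2\ln(1.25/\delta)}\,\Delta/\epsilon$ with $\Delta=O(B^2)$, and $\widetilde{\sigma^2_x}=\widetilde{E[X^2]}-\widetilde{E[X]}^2$. Then, in the asymptotic regime $n,B\to\infty$ and $\epsilon,\delta,p\to0$, with probability at least $1-p$, $$|\widehat{\sigma^2_x}-\widetilde{\sigma^2_x}|=O\!\left(\frac{B^4\ln(1/\delta)\ln(1/p)}{\epsilon^2 n}\right).$$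
   Context: Here $e_1,e_2$ are the Gaussian noises added (after normalization by $n$) to the aggregated monomials $\sum x$ and $\sum x^2$ by a Gaussian mechanism with sensitivity $\Delta$; the probability is over this noise, and $\epsilon,\delta\in(0,1]$. *)

From HB Require Import structures.
From mathcomp Require Import all_boot all_order all_algebra.
From mathcomp Require Import all_classical all_reals all_analysis.
Set Implicit Arguments. Unset Strict Implicit. Unset Printing Implicit Defensive.
Import Order.TTheory GRing.Theory Num.Theory.
Local Open Scope ring_scope.

Section defs.
Variable R : realType.

(* A relation R[x,y] with n tuples t_0, ..., t_{n-1}; (t i).1 = t[x], (t i).2 = t[y]. *)

Definition emp_EX (n : nat) (t : 'I_n -> R * R) : R :=
  (\sum_(i < n) (t i).1) / n%:R.

Definition emp_EX2 (n : nat) (t : 'I_n -> R * R) : R :=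
  (\sum_(i < n) (t i).1 ^+ 2) / n%:R.

Definition emp_var (n : nat) (t : 'I_n -> R * R) : R :=
  emp_EX2 t - emp_EX t ^+ 2.

Definition noisy_var (n : nat) (t : 'I_n -> R * R) (e : R * R) : R :=
  (emp_EX2 t + e.2) - (emp_EX t + e.1) ^+ 2.

Definition gauss_sigma (eps delta Delta : R) : R :=
  Num.sqrt (2 * ln ((5 / 4) / delta)) * Delta / eps.

(* Joint law of (e1, e2): independent N(0, sigma^2/n^2), i.e. standard
   deviation sigma / n each. *)
Definition noise_law (n : nat) (eps delta Delta : R) :=
  (normal_prob 0 (gauss_sigma eps delta Delta / n%:R)
   \x normal_prob 0 (gauss_sigma eps delta Delta / n%:R))%E.

End defs.

From HB Require Import structures.
From mathcomp Require Import all_boot all_order all_algebra.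
From mathcomp Require Import all_classical all_reals all_analysis.
From mathcomp Require Import measurable_realfun ring lra.

Set Implicit Arguments.
Unset Strict Implicit.
Unset Printing Implicit Defensive.

Import Order.TTheory GRing.Theory Num.Theory.
Local Open Scope classical_set_scope.
Local Open Scope ring_scope.

(* The error is exactly [2 E[X] e1 + e1^2 - e2] with [|E[X]| <= B], hence at
   most [a (1 + 2 B) + a^2] when [|e1|, |e2| <= a].  Each noise is a centred
   Gaussian of standard deviation [s = sigma / n], where
   [sigma^2 <= 4 ln(1/delta) (Delta/eps)^2], and the tail bound
   [P(|e| > s r) <= 2 exp(-3 r^2 / 8)] with [r^2 = 16 ln(1/p)] gives
   [|e1|, |e2| <= a := s r] except with probability [4 p^6 <= p].  Then
   [a^2 = O(B^4 ln(1/delta) ln(1/p) / (eps n)^2)], and the linear term [a B]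
   is of the same order since [B, 1/eps, ln(1/delta) ln(1/p) >= 1]. *)

Lemma ln_inv_ge1 (R : realType) (q : R) : 0 < q -> q <= expR (-1) -> 1 <= ln q^-1.
Proof.
move=> q0 q1; rewrite lnV ?posrE // lerNr.
by rewrite -[X in _ <= X]expRK ler_ln ?posrE ?expR_gt0.
Qed.

Section normal_tail.
Context (R : realType).
Implicit Types s r : R.

Lemma normal_pdf0_double_sigma s x : s != 0 ->
  normal_pdf 0 s x = 2 * expR (- (3/8) * (x ^+ 2 / s ^+ 2)) * normal_pdf 0 (2 * s) x.
Proof.
move=> s0; have s20 : 2 * s != 0 by rewrite mulf_neq0.
rewrite !normal_pdfE // /normal_fun !subr0.
have -> : normal_peak s = 2 * normal_peak (2 * s).
  rewrite /normal_peak.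
  have -> : (2 * s) ^+ 2 * pi *+ 2 = 2 ^+ 2 * (s ^+ 2 * pi *+ 2).
    by rewrite exprMn -mulrA -mulrnAr.
  by rewrite sqrtrM ?sqr_ge0 // sqrtr_sqr ger0_norm // invfM mulrA divff ?mul1r.
rewrite (_ : expR _ = expR (- (3/8) * (x ^+ 2 / s ^+ 2)) *
                    expR (- x ^+ 2 / ((2 * s) ^+ 2 *+ 2))); first ring.
by rewrite -expRD; congr expR; field.
Qed.

Lemma normal_prob_normr_gt s r : 0 < s -> 0 <= r ->
  (normal_prob 0 s [set x : R | (s * r < `|x|)%R] <= (2 * expR (- (3/8) * r ^+ 2))%:E)%E.
Proof.
move=> s0 r0; set A := [set x | _].
have mA : measurable A.
  rewrite (_ : A = ~` [set x | `|x| <= s * r]); last first.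
    by apply/seteqP; split => x; rewrite /A /= ltNge => /negP.
  by apply: measurableC; rewrite -[X in measurable X]setTI; apply: measurable_fun_le.
set c := 2 * expR _; have c0 : 0 <= c by rewrite mulr_ge0 ?expR_ge0.
have mpdf m s' : measurable_fun A (normal_pdf m s').
  exact: measurable_funTS (measurable_normal_pdf m s').
(* On the tail, the N(0, s) density is at most [c] times the N(0, 2 s) one. *)
apply: (@le_trans _ _
  (\int[lebesgue_measure]_(x in A) (c * normal_pdf 0 (2 * s) x)%:E)%E).
  apply: ge0_le_integral => //.
  - by move=> x _; rewrite lee_fin normal_pdf_ge0.
  - by apply/measurable_EFinP; exact: mpdf.
  - by apply/measurable_EFinP; apply: measurable_funM => //; exact: mpdf.
  move=> x /= rx; rewrite lee_fin normal_pdf0_double_sigma ?gt_eqF //.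
  rewrite ler_wpM2r ?normal_pdf_ge0 // ler_wpM2l // ler_expR !mulNr lerN2.
  rewrite ler_pM2l ?divr_gt0 // ler_pdivlMr ?exprn_gt0 // -exprMn mulrC.
  rewrite -[x ^+ 2]real_normK ?num_real //.
  by apply/ltW; rewrite ltr_pXn2r // nnegrE mulr_ge0 // ltW.
under eq_integral do rewrite EFinM.
rewrite ge0_integralZl_EFin //=.
- rewrite -[leRHS]mule1 lee_wpmul2l ?lee_fin //.
  exact: (@probability_le1 _ _ _ (normal_prob 0 (2 * s)) _ mA).
- by move=> x _; rewrite lee_fin normal_pdf_ge0.
- by apply/measurable_EFinP; exact: mpdf.
Qed.

Lemma normal_prob_normr_le s r : 0 < s -> 0 <= r ->
  ((1 - 2 * expR (- (3/8) * r ^+ 2))%:E <=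
    normal_prob 0 s [set x : R | (`|x| <= s * r)%R])%E.
Proof.
move=> s0 r0; set E := [set x | _].
have mE : measurable E by rewrite -[E]setTI; apply: measurable_fun_le.
have CE : ~` E = [set x | s * r < `|x|].
  by apply/seteqP; split => x; rewrite /E /= ltNge => /negP.
rewrite -[E]setCK probability_setC; last exact: measurableC.
rewrite CE EFinB leeB ?fin_num_measure //; exact: normal_prob_normr_gt.
Qed.

Lemma normal_prob2_normr_le s r : 0 < s -> 0 <= r ->
  ((1 - 4 * expR (- (3/8) * r ^+ 2))%:E <=
    (normal_prob 0 s \x normal_prob 0 s)
      ([set x : R | (`|x| <= s * r)%R] `*` [set x : R | (`|x| <= s * r)%R]))%E.
Proof.
move=> s0 r0; set E := [set x | _].
have mE : measurable E by rewrite -[E]setTI; apply: measurable_fun_le.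
rewrite product_measure1E //.
change ((1 - 4 * expR (- (3/8) * r ^+ 2))%:E <=
  normal_prob 0 s E * normal_prob 0 s E)%E.
have PE : normal_prob 0 s E = (fine (normal_prob 0 s E))%:E.
  by rewrite fineK ?fin_num_measure.
have := measure_ge0 (normal_prob 0 s) E; have := normal_prob_normr_le s0 r0.
rewrite -/E PE -EFinM !lee_fin; have := expR_ge0 (- (3/8) * r ^+ 2); nra.
Qed.

Lemma normal_prob2_normr_le_lnV s p : 0 < s -> 0 < p -> p <= expR (-1) ->
  ((1 - p)%:E <=
    (normal_prob 0 s \x normal_prob 0 s)
      ([set x : R | (`|x| <= s * Num.sqrt (16 * ln p^-1))%R] `*`
       [set x : R | (`|x| <= s * Num.sqrt (16 * ln p^-1))%R]))%E.
Proof.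
move=> s0 p0 pe; apply: le_trans (normal_prob2_normr_le s0 (sqrtr_ge0 _)).
have p2 : p <= 2^-1.
  apply: le_trans pe _; rewrite expRN lef_pV2 ?posrE ?expR_gt0 //.
  by have := expR_ge1Dx (1 : R); lra.
have p5 : p ^+ 5 <= 2^-1 ^+ 5.
  by apply: lerXn2r; rewrite // nnegrE ?invr_ge0 ?ler0n ?ltW.
have -> : expR (- (3/8) * Num.sqrt (16 * ln p^-1) ^+ 2) = p ^+ 6.
  rewrite sqr_sqrtr; last by have := ln_inv_ge1 p0 pe; lra.
  have pE : p = expR (ln p) by rewrite lnK ?posrE.
  rewrite [in RHS]pE -expRM_natl lnV ?posrE //; congr expR; lra.
rewrite lee_fin lerD2l lerN2 exprSr mulrA mulrC ler_piMr //; lra.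
Qed.

End normal_tail.

Section noisy_variance.
Context (R : realType) (n : nat) (t : 'I_n -> R * R).

Lemma emp_var_sub_noisy_var e :
  emp_var t - noisy_var t e = 2 * emp_EX t * e.1 + e.1 ^+ 2 - e.2.
Proof. by rewrite /emp_var /noisy_var; ring. Qed.

Lemma normr_emp_EX_le B : (0 < n)%N -> (forall i, `|(t i).1| <= B) ->
  `|emp_EX t| <= B.
Proof.
move=> n0 tB; have n0' : (0 : R) < n%:R by rewrite ltr0n.
rewrite /emp_EX normrM [X in _ * X]ger0_norm ?invr_ge0 ?ler0n // ler_pdivrMr //.
apply: le_trans (ler_norm_sum _ _ _) _.
by apply: le_trans (ler_sum _ (fun i _ => tB i)) _; rewrite sumr_const card_ord mulr_natr.
Qed.

Lemma normr_emp_var_sub_noisy_var_le B a e :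
  `|emp_EX t| <= B -> `|e.1| <= a -> `|e.2| <= a ->
  `|emp_var t - noisy_var t e| <= a * (1 + 2 * B) + a ^+ 2.
Proof.
move=> + e1a e2a; rewrite emp_var_sub_noisy_var; move: (emp_EX t) => m mB.
have a0 : 0 <= a := le_trans (normr_ge0 _) e1a.
have m1 : `|m| * `|e.1| <= B * a by apply: ler_pM.
have s1 : `|e.1| * `|e.1| <= a ^+ 2 by rewrite -expr2 ler_pXn2r ?nnegrE.
apply: le_trans (ler_normB _ _) _; apply: le_trans (lerD (ler_normD _ _) (lexx _)) _.
rewrite !normrM normr_nat; lra.
Qed.

Lemma measurable_noisy_var_err c :
  measurable [set e : R * R | `|emp_var t - noisy_var t e| <= c].
Proof.
rewrite -[X in measurable X]setTI; apply: measurable_fun_le => //.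
apply: measurableT_comp; first exact: normr_measurable.
apply: measurable_funB => //; apply: measurable_funB; first exact: measurable_funD.
by apply: measurable_funX; apply: measurable_funD.
Qed.

End noisy_variance.

Lemma normr_fst_le (R : realType) (x : R * R) :
  `|x.1| <= Num.sqrt (x.1 ^+ 2 + x.2 ^+ 2).
Proof. by rewrite -sqrtr_sqr ler_sqrt ?addr_ge0 ?sqr_ge0 // lerDl sqr_ge0. Qed.

Section gaussian_mechanism.
Context (R : realType).

Lemma gauss_sigma_gt0 (eps delta Delta : R) :
  0 < eps -> 0 < delta <= 1 -> 0 < Delta -> 0 < gauss_sigma eps delta Delta.
Proof.
move=> e0 /andP[d0 d1] D0; rewrite /gauss_sigma !mulr_gt0 ?invr_gt0 // sqrtr_gt0.
by rewrite mulr_gt0 // ln_gt0 // ltr_pdivlMr //; lra.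
Qed.

Lemma sqr_gauss_sigma_le (eps delta Delta D : R) :
  0 < eps -> 0 < delta -> delta <= expR (-1) -> 0 <= Delta <= D ->
  gauss_sigma eps delta Delta ^+ 2 <= 4 * ln delta^-1 * (D / eps) ^+ 2.
Proof.
move=> e0 d0 d1 /andP[D0 DD]; have lam1 : 1 <= ln delta^-1 by exact: ln_inv_ge1.
have l54 : 0 <= ln (5/4 : R) <= 1.
  rewrite ln_ge0 /=; last lra.
  rewrite -[X in _ <= X]expRK ler_ln ?posrE ?expR_gt0 //.
  by have := expR_ge1Dx (1 : R); lra.
have lnE : ln (5/4 / delta) = ln (5/4) + ln delta^-1 by rewrite lnM ?posrE ?invr_gt0.
rewrite /gauss_sigma -mulrA exprMn sqr_sqrtr; last by rewrite lnE; lra.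
apply: ler_pM; rewrite ?sqr_ge0 ?lnE //; [lra | lra |].
have D0' : 0 <= D := le_trans D0 DD.
by apply: lerXn2r; rewrite ?nnegrE ?divr_ge0 ?ler_pM2r ?invr_gt0 ?(ltW e0).
Qed.

End gaussian_mechanism.

Lemma quadratic_error_le (R : realType) (CD B u v L a : R) :
  0 <= CD -> 1 <= B -> 1 <= u -> 0 < v <= 1 -> 1 <= L -> 0 <= a ->
  a ^+ 2 <= 64 * L * (CD * B ^+ 2 * u * v) ^+ 2 ->
  a * (1 + 2 * B) + a ^+ 2 <= (24 * CD + 64 * CD ^+ 2) * (L * (B ^+ 4 * u ^+ 2 * v)).
Proof.
move=> CD0 B1 u1 /andP[v0 v1] L1 a0; set D := CD * B ^+ 2 * u * v => aD.
have [B0 u0 v0' L0] : [/\ 0 <= B, 0 <= u, 0 <= v & 0 <= L] by split; lra.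
have D0 : 0 <= D by rewrite /D !mulr_ge0 ?sqr_ge0.
have a8 : a <= 8 * L * D.
  rewrite -(@ler_pXn2r _ 2) ?nnegrE ?mulr_ge0 //; apply: (le_trans aD).
  rewrite (_ : (8 * L * D) ^+ 2 = 64 * L ^+ 2 * D ^+ 2); last ring.
  by apply: ler_wpM2r; [exact: sqr_ge0 | nra].
have lin : a * (1 + 2 * B) <= 24 * CD * (L * (B ^+ 4 * u ^+ 2 * v)).
  apply: (@le_trans _ _ ((8 * L * D) * (3 * B))); first by apply: ler_pM; lra.
  have -> : 8 * L * D * (3 * B) = 24 * CD * L * v * (B ^+ 3 * u) by rewrite /D; ring.
  have -> : 24 * CD * (L * (B ^+ 4 * u ^+ 2 * v)) =
            24 * CD * L * v * (B ^+ 4 * u ^+ 2) by ring.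
  rewrite ler_wpM2l ?mulr_ge0 //.
  rewrite (_ : B ^+ 4 * u ^+ 2 = B ^+ 3 * u * (B * u)); last ring.
  by rewrite ler_peMr ?mulr_ge0 ?exprn_ge0 //; nra.
have quad : a ^+ 2 <= 64 * CD ^+ 2 * (L * (B ^+ 4 * u ^+ 2 * v)).
  apply: (le_trans aD).
  have -> : 64 * L * D ^+ 2 = 64 * CD ^+ 2 * L * B ^+ 4 * u ^+ 2 * v * v.
    by rewrite /D; ring.
  have -> : 64 * CD ^+ 2 * (L * (B ^+ 4 * u ^+ 2 * v)) =
            64 * CD ^+ 2 * L * B ^+ 4 * u ^+ 2 * v by ring.
  by rewrite ler_piMr ?mulr_ge0 ?exprn_ge0.
lra.
Qed.

Lemma noise_error_le (R : realType) (n : nat) (CD B eps lam l g r : R) :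
  (0 < n)%N -> 0 <= CD -> 1 <= B -> 0 < eps <= 1 -> 1 <= lam -> 1 <= l ->
  0 <= g -> g ^+ 2 <= 4 * lam * (CD * B ^+ 2 / eps) ^+ 2 ->
  0 <= r -> r ^+ 2 = 16 * l ->
  g / n%:R * r * (1 + 2 * B) + (g / n%:R * r) ^+ 2 <=
    (24 * CD + 64 * CD ^+ 2) * (B ^+ 4 * lam * l / (eps ^+ 2 * n%:R)).
Proof.
move=> n0 CD0 B1 /andP[eps0 eps1] lam1 l1 g0 g2 r0 r2.
have n0' : (0 : R) < n%:R by rewrite ltr0n.
have -> : B ^+ 4 * lam * l / (eps ^+ 2 * n%:R) =
          lam * l * (B ^+ 4 * eps^-1 ^+ 2 * n%:R^-1).
  by rewrite invfM exprVn; ring.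
apply: quadratic_error_le => //.
- by rewrite invr_ge1 ?unitfE ?gt_eqF.
- by rewrite invr_gt0 n0' invf_le1 ?ler1n.
- by rewrite -[1]mulr1 ler_pM.
- by rewrite !mulr_ge0 ?invr_ge0 // ltW.
rewrite exprMn r2 [leLHS](_ : _ = 16 * l / n%:R ^+ 2 * g ^+ 2); last first.
  by field; rewrite gt_eqF.
rewrite [leRHS](_ : _ = 16 * l / n%:R ^+ 2 * (4 * lam * (CD * B ^+ 2 / eps) ^+ 2)).
  by apply: ler_wpM2l g2; rewrite divr_ge0 ?sqr_ge0 //; lra.
by field; rewrite !gt_eqF.
Qed.

Theorem lemma1 (R : realType) (CD : R) (hCD : 0 < CD) :
  exists K : R, 0 < K /\
  exists (N0 : nat) (B0 eps0 delta0 p0 : R),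
    0 < eps0 /\ 0 < delta0 /\ 0 < p0 /\
    forall (n : nat) (B eps delta p Delta : R) (t : 'I_n -> R * R),
      (0 < n)%N -> (N0 <= n)%N ->
      B0 <= B ->
      0 < eps <= eps0 -> eps <= 1 ->
      0 < delta <= delta0 -> delta <= 1 ->
      0 < p <= p0 ->
      0 < Delta <= CD * B ^+ 2 ->
      (forall i, Num.sqrt ((t i).1 ^+ 2 + (t i).2 ^+ 2) <= B) ->
      (((1 - p)%R)%:E <=
        noise_law n eps delta Delta
          [set e | (`|emp_var t - noisy_var t e|
                   <= K * (B ^+ 4 * ln (delta^-1) * ln (p^-1) / (eps ^+ 2 * n%:R)))%R])%E.
Proof.
exists (24 * CD + 64 * CD ^+ 2); split; first by rewrite addr_gt0 ?mulr_gt0 ?exprn_gt0.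
exists 1%N, 1, 1, (expR (-1)), (expR (-1)); do 3!split => //; try exact: expR_gt0.
move=> n B eps delta p Delta t n0 _ B1 /andP[eps0 _] eps1 /andP[delta0 delta_e] delta1
  /andP[p0 p_e] /andP[Delta0 DeltaB] tB.
set g := gauss_sigma eps delta Delta; set s := g / n%:R.
have s0 : 0 < s by rewrite divr_gt0 ?ltr0n // gauss_sigma_gt0 ?delta0.
set r := Num.sqrt (16 * ln p^-1); set E := [set x : R | `|x| <= s * r].
apply: (@le_trans _ _ (noise_law n eps delta Delta (E `*` E))).
  exact: normal_prob2_normr_le_lnV.
apply: le_measure; rewrite ?inE.
- by apply: measurableX; rewrite -[X in measurable X]setTI; apply: measurable_fun_le.
- exact: measurable_noisy_var_err.
move=> e [/= se1 se2].
have EX_B : `|emp_EX t| <= B.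
  by apply: normr_emp_EX_le => // i; apply: le_trans (tB i); exact: normr_fst_le.
apply: le_trans (normr_emp_var_sub_noisy_var_le EX_B se1 se2) _.
have l1 : 1 <= ln p^-1 by exact: ln_inv_ge1.
apply: noise_error_le => //; first exact: ltW.
- by rewrite eps0.
- exact: ln_inv_ge1.
- by apply/ltW/gauss_sigma_gt0; rewrite ?delta0.
- by apply: sqr_gauss_sigma_le; rewrite ?(ltW Delta0).
- exact: sqrtr_ge0.
- by rewrite sqr_sqrtr // mulr_ge0 //; lra.
Qed.
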